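(* Let $p$ be a prime and $G=S^1\times C_p$. Then $G$ is not a BU-group of type I: there exist fixed-point-free orthogonal $G$-representations $V,W$ with $\dim V>\dim W$ and a $G$-map $f:S(V)\to S(W)$. (For instance, $V=2V_{1,0}\oplus 2V_{1,1}$ and $W=2V_{p,0}\oplus V_{0,1}$.)
   Context: Let $a$ be a generator of $C_p$ and $\xi_p=e^{2\pi\sqrt{-1}/p}$. For $k\in\mathbb{Z}$ and $l\in\mathbb{Z}/p$, $V_{k,l}$ is the $1$-dimensional unitary $G$-representation on $\mathbb{C}$ with $(t,a^j)\cdot z=t^k\xi_p^{jl}z$ for $t\in S^1$, regarded as a real $2$-dimensional orthogonal representation. An orthogonal $G$-representation $V$ is fixed-point-free if $V^G=0$; $S(V)$ denotes its unit sphere; a $G$-map is a continuous $G$-equivariant map. $G$ is a BU-group of type I if for all fixed-point-free orthogonal $G$-representations $V,W$, the existence of a $G$-map $S(V)\to S(W)$ implies $\dim V\le\dim W$. *)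

From HB Require Import structures.
From mathcomp Require Import all_boot all_order all_algebra.
From mathcomp Require Import all_classical all_reals all_analysis.
Set Implicit Arguments. Unset Strict Implicit. Unset Printing Implicit Defensive.
Import Order.TTheory GRing.Theory Num.Theory.
Import numFieldNormedType.Exports.
Local Open Scope classical_set_scope.
Local Open Scope ring_scope.

(* The circle group S^1, realized as SO(2) = rotation matrices in 'M[R]_2,
   with group law matrix multiplication (isomorphic to unit complex numbers). *)
Definition SO2 (R : realType) : set 'M[R]_2 :=
  [set t | t *m t^T = 1%:M /\ \det t = 1].

(* An orthogonal representation of G = S^1 x C_p on R^n (standard inner
   product): rho t j is the matrix of (t, a^j), for t in SO2, j : 'Z_p. *)
Definition orth_rep (R : realType) (p n : nat)
    (rho : 'M[R]_2 -> 'Z_p -> 'M[R]_n) : Prop :=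
  [/\ (forall t j, SO2 t -> rho t j *m (rho t j)^T = 1%:M),
      rho 1%:M 0 = 1%:M,
      (forall t s j k, SO2 t -> SO2 s ->
          rho (t *m s) (j + k) = rho t j *m rho s k) &
      (forall j, {within @SO2 R, continuous (fun t => rho t j)})].

(* Action of (t, a^j) on a vector v in R^n (row vector convention). *)
Definition act (R : realType) (p n : nat) (rho : 'M[R]_2 -> 'Z_p -> 'M[R]_n)
    (t : 'M[R]_2) (j : 'Z_p) (v : 'rV[R]_n) : 'rV[R]_n :=
  v *m (rho t j)^T.

Definition fixed_point_free (R : realType) (p n : nat)
    (rho : 'M[R]_2 -> 'Z_p -> 'M[R]_n) : Prop :=
  forall v : 'rV[R]_n,
    (forall t j, SO2 t -> act rho t j v = v) -> v = 0.

Definition unit_sphere (R : realType) (n : nat) : set 'rV[R]_n :=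
  [set v | \sum_(i < n) (v ord0 i) ^+ 2 = 1].

Definition Gmap (R : realType) (p n m : nat)
    (rhoV : 'M[R]_2 -> 'Z_p -> 'M[R]_n) (rhoW : 'M[R]_2 -> 'Z_p -> 'M[R]_m)
    (f : 'rV[R]_n -> 'rV[R]_m) : Prop :=
  [/\ (forall v, @unit_sphere R n v -> @unit_sphere R m (f v)),
      {within @unit_sphere R n, continuous f} &
      (forall t j v, SO2 t -> @unit_sphere R n v ->
          f (act rhoV t j v) = act rhoW t j (f v))].

From HB Require Import structures.
From mathcomp Require Import all_boot all_order all_algebra.
From mathcomp Require Import all_classical all_reals all_analysis.
From mathcomp Require Import complex ring.
Set Implicit Arguments. Unset Strict Implicit. Unset Printing Implicit Defensive.
Import Order.TTheory GRing.Theory Num.Theory.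
Import numFieldNormedType.Exports.
Local Open Scope ring_scope.

(* Identify R^2 with C = R[i], S^1 = SO(2) with the unit circle, and let
   V = 2V_{1,0} + 2V_{1,1} = C^4 and W = 2V_{p,0} + V_{0,1} = C^3, so that
   (u, a^j) acts on V by the diagonal matrix (u, u, u xi^j, u xi^j) and on W
   by (u^p, u^p, xi^j), where xi != 1 is a p-th root of unity.  Both are
   fixed-point-free and dim V = 8 > 6 = dim W.  The polynomial map
     g(z1, z2, z3, z4) = (z1^p + z3^p, z2^p - (-z4)^p, z1^* z3 + z2^* z4)
   is G-equivariant and vanishes only at 0 (this is the heart of the proof,
   done over any numeric closed field), so g / |g| is a G-map S(V) -> S(W). *)

Lemma neg1_neq1 (C : numDomainType) : (-1 : C) != 1.
Proof. by rewrite lt_eqF ?ltrN10. Qed.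

Section ClosedField.
Variable C : numClosedFieldType.

Lemma mul_fixed_eq0 (z a : C) : z * a = z -> a != 1 -> z = 0.
Proof.
move=> za a_neq1; have : z * (a - 1) = 0 by rewrite mulrBr za mulr1 subrr.
by move/eqP; rewrite mulf_eq0 subr_eq0 (negbTE a_neq1) orbF => /eqP.
Qed.

(* Nontrivial n-th roots of unity exist in characteristic 0 closed fields:
   take a root of 1 + X + ... + X^(n-1). *)
Lemma nontrivial_unity_root n : (1 < n)%N -> exists2 w : C, w ^+ n = 1 & w != 1.
Proof.
move=> n_gt1; pose q : {poly C} := \poly_(i < n) 1.
have size_q : size q = n by rewrite size_poly_eq ?oner_neq0.
have /closed_rootP [w /rootP qw0] : size q != 1 by rewrite size_q gtn_eqF.
have sum_w0 : \sum_(i < n) w ^+ i = 0.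
  by rewrite -[RHS]qw0 horner_poly; apply: eq_bigr => i _; rewrite mul1r.
exists w; first by apply/eqP; rewrite -subr_eq0 subrX1 sum_w0 mulr0.
apply/eqP => w1; move: sum_w0; rewrite w1 (eq_bigr _ (fun (i : 'I_n) _ => expr1n C i)).
by rewrite sumr_const card_ord => /eqP; rewrite pnatr_eq0 => /eqP n0; rewrite n0 in n_gt1.
Qed.

Lemma unimodular_root_neg1 n : (0 < n)%N -> exists u : C, `|u| = 1 /\ u ^+ n = -1.
Proof.
move=> n_gt0; exists (n.-root (-1)); split; last exact: rootCK.
apply/eqP; rewrite -(pexpr_eq1 n_gt0) // -normrX rootCK //.
by rewrite normrN normr1.
Qed.

Lemma unimodular_conjK (u : C) : `|u| = 1 -> u^* * u = 1.
Proof. by move=> u1; rewrite -normCKC u1 expr1n. Qed.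

End ClosedField.

Section EquivariantPolynomialMap.
Variables (C : numClosedFieldType) (N : nat).

(* Diagonal coefficients of the action of (u, w), |u| = 1, w ^+ N = 1, on
   V = 2V_{1,0} + 2V_{1,1} = C^4 and on W = 2V_{N,0} + V_{0,1} = C^3. *)
Definition actV (u w : C) (i : 'I_4) : C := if (i < 2)%N then u else u * w.
Definition actW (u w : C) (i : 'I_3) : C := if (i < 2)%N then u ^+ N else w.

Definition poly_map (z : 'I_4 -> C) (i : 'I_3) : C :=
  let: (z1, z2, z3, z4) := (z (inord 0), z (inord 1), z (inord 2), z (inord 3)) in
  nth 0 [:: z1 ^+ N + z3 ^+ N; z2 ^+ N - (- z4) ^+ N; z1^* * z3 + z2^* * z4] i.

Lemma poly_map_equivariant (u w : C) (z : 'I_4 -> C) (i : 'I_3) :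
  `|u| = 1 -> w ^+ N = 1 ->
  poly_map (fun k => z k * actV u w k) i = poly_map z i * actW u w i.
Proof.
move=> u1 wN; have uu := unimodular_conjK u1.
case: i => [[|[|[|//]]] ?]; rewrite /poly_map /actV /actW /= !inordK //=.
- by rewrite !exprMn wN; ring.
- by rewrite -!mulNr !exprMn wN; ring.
- rewrite !rmorphM /=.
  transitivity ((z (inord 0))^* * z (inord 2) * w * (u^* * u)
              + (z (inord 1))^* * z (inord 3) * w * (u^* * u)); first by ring.
  by rewrite uu; ring.
Qed.

(* poly_map has no zero but 0: writing s = z1^* z3 = z2^* (-z4), the
   equations give s^N = -|z1^N|^2 and s^N = |z2^N|^2, so z1 = z2 = 0 and then
   z3 = z4 = 0. *)
Lemma poly_map_eq0 (z : 'I_4 -> C) : (0 < N)%N ->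
  (forall i, poly_map z i = 0) -> forall i, z i = 0.
Proof.
move=> N_gt0 g0.
have := g0 (inord 0); have := g0 (inord 1); have := g0 (inord 2).
rewrite /poly_map !inordK //=.
set a := z (inord 0); set b := z (inord 1); set c := z (inord 2); set d := z (inord 3).
move=> e3 e2 e1.
have e1' : c ^+ N = - a ^+ N by apply/eqP; rewrite -addr_eq0 addrC e1.
have e2' : (- d) ^+ N = b ^+ N by apply/eqP; rewrite eq_sym -subr_eq0 e2.
have e3' : a^* * c = b^* * (- d) by rewrite mulrN; apply/eqP; rewrite -addr_eq0 e3.
have opp_norms : - `|a ^+ N| ^+ 2 = `|b ^+ N| ^+ 2.
  have := congr1 (fun x => x ^+ N) e3'.
  by rewrite /= !exprMn -!rmorphXn e1' e2' mulrN -!normCKC.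
have normsum : `|a ^+ N| ^+ 2 + `|b ^+ N| ^+ 2 = 0 by rewrite -opp_norms subrr.
have [aN0 bN0] : a ^+ N = 0 /\ b ^+ N = 0.
  move/eqP: normsum; rewrite paddr_eq0 ?exprn_ge0 // !sqrf_eq0 !normr_eq0.
  by case/andP => /eqP -> /eqP ->.
have root0 (x : C) : x ^+ N = 0 -> x = 0.
  by move/eqP; rewrite expf_eq0 N_gt0 => /eqP.
move=> i; rewrite -(inord_val i); case: i => [[|[|[|[|//]]]] ?] /=.
- exact: root0.
- exact: root0.
- by apply: root0; rewrite e1' aN0 oppr0.
- by apply: oppr_inj; rewrite oppr0; apply: root0; rewrite e2'.
Qed.

End EquivariantPolynomialMap.

Section ComplexCoordinates.
Variable R : realType.
Local Notation C := R[i].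

Lemma ord2P (i : 'I_2) : i = ord0 \/ i = ord_max.
Proof. by case: i => [[|[|//]] ?]; [left|right]; apply/val_inj. Qed.

Lemma sum_ord2 (F : 'I_2 -> R) : \sum_(i < 2) F i = F ord0 + F ord_max.
Proof. by rewrite big_ord_recr big_ord1; congr (F _ + F _); apply/val_inj. Qed.

Lemma det_mx2 (M : 'M[R]_2) :
  \det M = M ord0 ord0 * M ord_max ord_max - M ord0 ord_max * M ord_max ord0.
Proof.
rewrite (expand_det_row _ ord0) sum_ord2 /cofactor !det_mx11 !mxE /= expr0 expr1.
have -> : lift ord0 (0 : 'I_1) = ord_max by apply/val_inj.
have -> : lift ord_max (0 : 'I_1) = ord0 by apply/val_inj.
ring.
Qed.

Definition sqn (z : C) : R := complex.Re z ^+ 2 + complex.Im z ^+ 2.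

Lemma sqnE (z : C) : (sqn z)%:C%C = `|z| ^+ 2.
Proof.
rewrite normCK; case: z => a b; apply/eqP; rewrite eq_complex /=.
by rewrite /sqn /=; apply/andP; split; apply/eqP; ring.
Qed.

Lemma sqnM (x z : C) : sqn (x * z) = sqn x * sqn z.
Proof. by case: x z => [a b] [c d]; rewrite /sqn /=; ring. Qed.

Lemma sqn_ge0 (z : C) : 0 <= sqn z.
Proof. by rewrite addr_ge0 ?sqr_ge0. Qed.

Lemma sqn_eq0 (z : C) : sqn z = 0 -> z = 0.
Proof.
case: z => a b /eqP; rewrite /sqn paddr_eq0 ?sqr_ge0 // !sqrf_eq0 /=.
by case/andP => /eqP -> /eqP ->.
Qed.

Lemma unimodularE (z : C) : (`|z| = 1) <-> (sqn z = 1).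
Proof.
split => [z1 | sqn1].
  by have := sqnE z; rewrite z1 expr1n => -[].
by apply/eqP; rewrite -sqrp_eq1 // -sqnE sqn1.
Qed.

Definition row2 (z : C) : 'rV[R]_2 :=
  \row_(k < 2) if k == 0 :> nat then complex.Re z else complex.Im z.
Definition of_row2 (b : 'rV[R]_2) : C := Complex (b ord0 ord0) (b ord0 ord_max).

Lemma row2K : cancel row2 of_row2.
Proof. by case=> a b; rewrite /of_row2 !mxE. Qed.

Lemma of_row2K : cancel of_row2 row2.
Proof.
move=> b; apply/rowP => k; rewrite mxE.
by case: (ord2P k) => ->.
Qed.

Lemma sqn_row2 (b : 'rV[R]_2) : \sum_(l < 2) b ord0 l ^+ 2 = sqn (of_row2 b).
Proof. by rewrite sum_ord2. Qed.

(* The real 2x2 matrix of multiplication by z; it acts on row vectors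
   through its transpose, as the representations do in [act]. *)
Definition mulmx2 (z : C) : 'M[R]_2 := \matrix_(i < 2, k < 2)
  if i == k :> nat then complex.Re z
  else if k == 0 :> nat then complex.Im z else - complex.Im z.

Lemma row2_mul (x z : C) : row2 x *m (mulmx2 z)^T = row2 (x * z).
Proof.
case: x z => [a b] [c d]; apply/rowP => k; rewrite !mxE sum_ord2 !mxE.
by case: (ord2P k) => -> /=; ring.
Qed.

Lemma mulmx2M (z w : C) : mulmx2 z *m mulmx2 w = mulmx2 (z * w).
Proof.
case: z w => [a b] [c d]; apply/matrixP => i k; rewrite !mxE sum_ord2 !mxE.
by case: (ord2P i) => ->; case: (ord2P k) => -> /=; ring.
Qed.

Lemma tr_mulmx2 (z : C) : (mulmx2 z)^T = mulmx2 z^*.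
Proof.
case: z => a b; apply/matrixP => i k; rewrite !mxE.
by case: (ord2P i) => ->; case: (ord2P k) => -> /=; rewrite ?opprK.
Qed.

Lemma mulmx2_real (r : R) : mulmx2 r%:C%C = r%:M.
Proof.
apply/matrixP => i k; rewrite !mxE.
by case: (ord2P i) => ->; case: (ord2P k) => -> /=; rewrite ?oppr0.
Qed.

Lemma mulmx2_unitary (z : C) : `|z| = 1 -> mulmx2 z *m (mulmx2 z)^T = 1%:M.
Proof.
move=> z1; rewrite tr_mulmx2 mulmx2M -normCK z1 expr1n.
by rewrite -(mulmx2_real 1).
Qed.

(* SO(2) is the circle group: t is multiplication by its first column. *)
Definition angle (t : 'M[R]_2) : C := Complex (t ord0 ord0) (t ord_max ord0).

Lemma angle_mulmx2 (z : C) : angle (mulmx2 z) = z.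
Proof. by case: z => a b; rewrite /angle !mxE. Qed.

Lemma angle1 : angle 1%:M = 1.
Proof. by rewrite -(mulmx2_real 1) angle_mulmx2. Qed.

Lemma SO2_mulmx2 (z : C) : `|z| = 1 -> SO2 (mulmx2 z).
Proof.
move=> z1; split; first exact: mulmx2_unitary.
move/unimodularE: z1; case: z => a b; rewrite det_mx2 !mxE /sqn /= => <-; ring.
Qed.

Lemma SO2P (t : 'M[R]_2) : SO2 t -> t = mulmx2 (angle t) /\ `|angle t| = 1.
Proof.
move=> [/matrixP orth]; rewrite det_mx2.
have := orth ord0 ord0; have := orth ord_max ord_max.
rewrite !mxE !sum_ord2 !mxE /=.
set a := t ord0 ord0; set b := t ord0 ord_max.
set c := t ord_max ord0; set e := t ord_max ord_max.
move=> o11 o00 det1.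
have [ea eb] : e = a /\ b = - c.
  have : sqn (Complex (e - a) (c + b)) = 0.
    rewrite /sqn /=.
    transitivity ((a * a + b * b) + (c * c + e * e) - 2 * (a * e - b * c)); first by ring.
    by rewrite o00 o11 det1; ring.
  move/sqn_eq0 => [/eqP]; rewrite subr_eq0 => /eqP -> /eqP.
  by rewrite addr_eq0 => /eqP ->; rewrite opprK.
split.
  apply/matrixP => i k; rewrite !mxE /=.
  by case: (ord2P i) => ->; case: (ord2P k) => -> //=; rewrite -?ea ?eb.
apply/unimodularE; apply: etrans o00; rewrite /sqn /angle /= -/a -/c eb; ring.
Qed.

Lemma angleM (t s : 'M[R]_2) : SO2 t -> angle (t *m s) = angle t * angle s.
Proof.
move=> /SO2P [-> _]; rewrite angle_mulmx2; case: (angle t) => a b.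
by rewrite /angle !mxE !sum_ord2 !mxE /=; congr Complex; ring.
Qed.

End ComplexCoordinates.

(* R^(2k) = C^k: a row vector is a row of k blocks of size 2, the i-th
   block being the i-th complex coordinate. *)
Section ComplexBlocks.
Variable R : realType.
Local Notation C := R[i].

Definition cvec k (F : 'I_k -> C) : 'rV[R]_(\sum_(i < k) 2) := \mxrow_i row2 (F i).
Definition cblk k (v : 'rV[R]_(\sum_(i < k) 2)) (i : 'I_k) : C := of_row2 (submxrow v i).

Lemma cvecK k : cancel (@cvec k) (@cblk k).
Proof. by move=> F; apply: funext => i; rewrite /cblk /cvec mxrowK row2K. Qed.

Lemma cblkK k : cancel (@cblk k) (@cvec k).
Proof.
by move=> v; rewrite /cvec /cblk; under eq_mxrow do rewrite of_row2K; rewrite submxrowK.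
Qed.

Lemma cblk_eq0 k (v : 'rV[R]_(\sum_(i < k) 2)) : (forall i, cblk v i = 0) -> v = 0.
Proof.
move=> v0; rewrite -(cblkK v) /cvec; under eq_mxrow do rewrite v0.
rewrite -(mxrow0 (q_ := fun _ : 'I_k => 2%N)); apply: eq_mxrow => i.
by apply/rowP => l; rewrite !mxE; case: ifP.
Qed.

Definition sqnorm n (v : 'rV[R]_n) : R := \sum_(l < n) v ord0 l ^+ 2.

Lemma sqnorm_cblk k (v : 'rV[R]_(\sum_(i < k) 2)) :
  sqnorm v = \sum_(i < k) sqn (cblk v i).
Proof.
have -> : sqnorm v = (v *m v^T) ord0 ord0.
  by rewrite !mxE; apply: eq_bigr => l _; rewrite mxE expr2.
rewrite -[in LHS](submxrowK v) tr_mxrow mul_mxrow_mxcol summxE.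
apply: eq_bigr => i _; rewrite -sqn_row2 mxE; apply: eq_bigr => l _.
by rewrite !mxE expr2.
Qed.

Lemma sqnorm_scale n (c : R) (v : 'rV[R]_n) : sqnorm (c *: v) = c ^+ 2 * sqnorm v.
Proof. by rewrite /sqnorm big_distrr; apply: eq_bigr => l _; rewrite mxE exprMn. Qed.

Lemma sqnorm0 n : sqnorm (0 : 'rV[R]_n) = 0.
Proof. by rewrite /sqnorm big1 // => l _; rewrite mxE expr0n. Qed.

Lemma sqnorm_ge0 n (v : 'rV[R]_n) : 0 <= sqnorm v.
Proof. by apply: sumr_ge0 => l _; apply: sqr_ge0. Qed.

Definition diagC k (a : 'I_k -> C) : 'M[R]_(\sum_(i < k) 2) :=
  \mxdiag_(i < k) mulmx2 (a i).

Lemma diagC_act k (a : 'I_k -> C) (v : 'rV[R]_(\sum_(i < k) 2)) :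
  v *m (diagC a)^T = cvec (fun i => cblk v i * a i).
Proof.
rewrite tr_mxdiag -{1}(submxrowK v) mul_mxrow_mxdiag /cvec.
by apply: eq_mxrow => i; rewrite -row2_mul of_row2K.
Qed.

Lemma diagCM k (a b : 'I_k -> C) : diagC a *m diagC b = diagC (fun i => a i * b i).
Proof.
rewrite /diagC {1}/mxdiag mul_mxblock_mxdiag /mxdiag; apply/eq_mxblock => i j.
by case: eqVneq => [->|_]; rewrite ?conform_mx_id ?mul0mx // mulmx2M.
Qed.

Lemma diagC1 k : diagC (fun _ : 'I_k => 1) = 1%:M.
Proof. by rewrite -mxdiagZ; apply: eq_mxdiag => i; rewrite -mulmx2_real. Qed.

Lemma tr_diagC k (a : 'I_k -> C) : (diagC a)^T = diagC (fun i => (a i)^*).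
Proof. by rewrite /diagC tr_mxdiag; apply: eq_mxdiag => i; apply: tr_mulmx2. Qed.

Lemma diagC_unitary k (a : 'I_k -> C) :
  (forall i, `|a i| = 1) -> diagC a *m (diagC a)^T = 1%:M.
Proof.
move=> a1; rewrite tr_diagC diagCM -(diagC1 k); congr diagC.
by apply: funext => i; rewrite -normCK a1 expr1n.
Qed.

End ComplexBlocks.

Section Continuity.
Variables (R : realType) (T : topologicalType).
Local Notation C := R[i].
Implicit Types (f g : T -> R) (F G : T -> C).

Lemma continuous_add f g : continuous f -> continuous g -> continuous (fun x => f x + g x).
Proof. by move=> fc gc x; apply: continuousD; [exact: fc|exact: gc]. Qed.

Lemma continuous_mul f g : continuous f -> continuous g -> continuous (fun x => f x * g x).
Proof. by move=> fc gc x; apply: continuousM; [exact: fc|exact: gc]. Qed.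

Lemma continuous_opp f : continuous f -> continuous (fun x => - f x).
Proof. by move=> fc x; apply: continuousN; exact: fc. Qed.

Lemma continuous_sum n (f : 'I_n -> T -> R) :
  (forall i, continuous (f i)) -> continuous (fun x => \sum_(i < n) f i x).
Proof.
elim: n f => [|n IH] f fc; first by under eq_fun do rewrite big_ord0; apply: cst_continuous.
under eq_fun do rewrite big_ord_recr /=.
by apply: continuous_add; [apply: (IH (fun i => f (widen_ord (leqnSn n) i)))|].
Qed.

Definition ccont F : Prop :=
  continuous (fun x => complex.Re (F x)) /\ continuous (fun x => complex.Im (F x)).

Lemma ccont_cst (z : C) : ccont (fun _ => z).
Proof. by split; apply: cst_continuous. Qed.

Lemma ccont_add F G : ccont F -> ccont G -> ccont (fun x => F x + G x).
Proof.
move=> [F1 F2] [G1 G2]; split.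
  have -> : (fun x => complex.Re (F x + G x)) = fun x => complex.Re (F x) + complex.Re (G x).
    by apply: funext => x; case: (F x) (G x) => [a b] [c d].
  exact: continuous_add.
have -> : (fun x => complex.Im (F x + G x)) = fun x => complex.Im (F x) + complex.Im (G x).
  by apply: funext => x; case: (F x) (G x) => [a b] [c d].
exact: continuous_add.
Qed.

Lemma ccont_opp F : ccont F -> ccont (fun x => - F x).
Proof.
move=> [F1 F2]; split.
  have -> : (fun x => complex.Re (- F x)) = fun x => - complex.Re (F x).
    by apply: funext => x; case: (F x).
  exact: continuous_opp.
have -> : (fun x => complex.Im (- F x)) = fun x => - complex.Im (F x).
  by apply: funext => x; case: (F x).
exact: continuous_opp.
Qed.

Lemma ccont_mul F G : ccont F -> ccont G -> ccont (fun x => F x * G x).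
Proof.
move=> [F1 F2] [G1 G2]; split.
  have -> : (fun x => complex.Re (F x * G x)) = fun x =>
      complex.Re (F x) * complex.Re (G x) + - (complex.Im (F x) * complex.Im (G x)).
    by apply: funext => x; case: (F x) (G x) => [a b] [c d].
  by apply: continuous_add; [|apply: continuous_opp]; apply: continuous_mul.
have -> : (fun x => complex.Im (F x * G x)) = fun x =>
    complex.Re (F x) * complex.Im (G x) + complex.Im (F x) * complex.Re (G x).
  by apply: funext => x; case: (F x) (G x) => [a b] [c d].
by apply: continuous_add; apply: continuous_mul.
Qed.

Lemma ccont_conj F : ccont F -> ccont (fun x => (F x)^*).
Proof.
move=> [F1 F2]; split.
  have -> : (fun x => complex.Re ((F x)^*)) = fun x => complex.Re (F x).
    by apply: funext => x; case: (F x).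
  exact: F1.
have -> : (fun x => complex.Im ((F x)^*)) = fun x => - complex.Im (F x).
  by apply: funext => x; case: (F x).
exact: continuous_opp.
Qed.

Lemma ccont_exp F n : ccont F -> ccont (fun x => F x ^+ n).
Proof.
move=> Fc; elim: n => [|n IH]; first exact: ccont_cst.
by under eq_fun do rewrite exprS; apply: ccont_mul.
Qed.

Lemma ccont_if (b : bool) F G : ccont F -> ccont G -> ccont (fun x => if b then F x else G x).
Proof. by case: b. Qed.

Lemma mx_continuous m n (M : T -> 'M[R]_(m, n)) :
  (forall i j, continuous (fun x => M x i j)) -> continuous M.
Proof.
move=> Mc x A [P Pnbhs PA].
have : \forall y \near x, forall ij : 'I_m * 'I_n, P ij.1 ij.2 (M y ij.1 ij.2).
  by apply: filter_forall => -[i j]; exact: (Mc i j x _ (Pnbhs i j)).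
by apply: filterS => y Py; apply: PA => i j; exact: (Py (i, j)).
Qed.

Lemma ccont_mulmx2 F i j : ccont F -> continuous (fun x => mulmx2 (F x) i j).
Proof.
move=> [F1 F2]; case: (ord2P i) => ->; case: (ord2P j) => ->;
  under eq_fun do rewrite mxE /=; by [|apply: continuous_opp].
Qed.

Lemma diagC_continuous k (F : T -> 'I_k -> C) :
  (forall i, ccont (fun x => F x i)) -> continuous (fun x => diagC (F x)).
Proof.
move=> Fc; apply: mx_continuous => a b.
have -> : (fun x => diagC (F x) a b) = fun x =>
    if tagnat.sig1 a == tagnat.sig1 b
    then mulmx2 (F x (tagnat.sig1 a)) (tagnat.sig2 a) (tagnat.sig2 b) else 0.
  by apply: funext => x; rewrite /diagC /mxdiag !mxE; case: eqP; rewrite ?conform_mx_id ?mxE.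
by case: eqP => _; [apply: ccont_mulmx2 | apply: cst_continuous].
Qed.

Lemma cvec_continuous k (F : T -> 'I_k -> C) :
  (forall i, ccont (fun x => F x i)) -> continuous (fun x => cvec (F x)).
Proof.
move=> Fc; apply: mx_continuous => a b.
have -> : (fun x => cvec (F x) a b) = fun x => row2 (F x (tagnat.sig1 b)) ord0 (tagnat.sig2 b).
  by apply: funext => x; rewrite /cvec !mxE.
have [F1 F2] := Fc (tagnat.sig1 b).
by case: (ord2P (tagnat.sig2 b)) => ->; under eq_fun do rewrite mxE /=.
Qed.

End Continuity.

Lemma ccont_cblk (R : realType) k (i : 'I_k) :
  ccont (fun v : 'rV[R]_(\sum_(l < k) 2) => cblk v i).
Proof.
have coord (l : 'I_2) : (fun v : 'rV[R]_(\sum_(l < k) 2) => submxrow v i ord0 l) =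
    fun v => v ord0 (tagnat.Rank i l) by apply: funext => v; rewrite mxE.
by split; rewrite /cblk /of_row2 /= coord; apply: coord_continuous.
Qed.

Lemma sqnorm_continuous (R : realType) n : continuous (@sqnorm R n).
Proof.
apply: continuous_sum => l; under eq_fun do rewrite expr2.
by apply: continuous_mul; apply: coord_continuous.
Qed.

Lemma sqnorm_diagC_act (R : realType) k (a : 'I_k -> R[i]) v :
  (forall i, `|a i| = 1) -> sqnorm (v *m (diagC a)^T) = sqnorm v.
Proof.
move=> a1; rewrite diagC_act !sqnorm_cblk cvecK; apply: eq_bigr => i _.
by have /unimodularE sqn1 := a1 i; rewrite sqnM sqn1 mulr1.
Qed.

Section DiagonalRepresentations.
Variables (R : realType) (p k : nat) (a : 'M[R]_2 -> 'Z_p -> 'I_k -> R[i]).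

Lemma diagC_orth_rep :
  (forall t j i, SO2 t -> `|a t j i| = 1) ->
  (forall i, a 1%:M 0 i = 1) ->
  (forall t s j l i, SO2 t -> SO2 s -> a (t *m s) (j + l) i = a t j i * a s l i) ->
  (forall j i, ccont (fun t => a t j i)) ->
  orth_rep (fun t j => diagC (a t j)).
Proof.
move=> a1 a_one aM a_cont; split.
- by move=> t j t1; apply: diagC_unitary => i; apply: a1.
- by rewrite -(diagC1 R k); congr diagC; apply: funext => i; apply: a_one.
- by move=> t s j l t1 s1; rewrite diagCM; congr diagC; apply: funext => i; apply: aM.
- by move=> j; apply: continuous_subspaceT; apply: diagC_continuous => i; apply: a_cont.
Qed.

Lemma diagC_fixed_point_free :
  (forall i, exists t j, SO2 t /\ a t j i != 1) ->
  fixed_point_free (fun t j => diagC (a t j)).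
Proof.
move=> moving v fixed; apply: cblk_eq0 => i.
have [t [j [t1 ai1]]] := moving i; apply: mul_fixed_eq0 ai1.
by have := congr1 (fun w => cblk w i) (fixed t j t1); rewrite /act diagC_act cvecK.
Qed.

End DiagonalRepresentations.

(* An equivariant map G : C^k -> C^m between two such representations which
   vanishes only at 0 yields the G-map v |-> G v / |G v| on spheres.  To get
   a map continuous on the whole space, we divide instead by
   sqrt(|G v|^2 + (1 - |v|^2)^2), which agrees with |G v| on the sphere and
   never vanishes. *)
Section NormalizedMap.
Variables (R : realType) (p k m : nat).
Variables (aV : 'M[R]_2 -> 'Z_p -> 'I_k -> R[i]) (aW : 'M[R]_2 -> 'Z_p -> 'I_m -> R[i]).
Variable G : ('I_k -> R[i]) -> 'I_m -> R[i].
Hypothesis aV1 : forall t j i, SO2 t -> `|aV t j i| = 1.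
Hypothesis aW1 : forall t j i, SO2 t -> `|aW t j i| = 1.
Hypothesis G_equiv : forall t j z i, SO2 t ->
  G (fun l => z l * aV t j l) i = G z i * aW t j i.
Hypothesis G_eq0 : forall z, (forall i, G z i = 0) -> forall i, z i = 0.
Hypothesis G_cont : forall i, ccont (fun v : 'rV[R]_(\sum_(l < k) 2) => G (cblk v) i).

Definition Gvec (v : 'rV[R]_(\sum_(l < k) 2)) : 'rV[R]_(\sum_(i < m) 2) :=
  cvec (G (cblk v)).
Definition denom (v : 'rV[R]_(\sum_(l < k) 2)) : R :=
  sqnorm (Gvec v) + (1 - sqnorm v) ^+ 2.
Definition normalized (v : 'rV[R]_(\sum_(l < k) 2)) : 'rV[R]_(\sum_(i < m) 2) :=
  (Num.sqrt (denom v))^-1 *: Gvec v.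

Lemma Gvec_eq0 v : sqnorm (Gvec v) = 0 -> v = 0.
Proof.
rewrite sqnorm_cblk => sum0; apply: cblk_eq0; apply: G_eq0 => i; apply: sqn_eq0.
have -> : G (cblk v) i = cblk (Gvec v) i by rewrite /Gvec cvecK.
by apply: (psumr_eq0P (P := predT)) sum0 _ _ => // l _; apply: sqn_ge0.
Qed.

(* The denominator never vanishes: if G v = 0 then v = 0 and it equals 1. *)
Lemma denom_gt0 v : 0 < denom v.
Proof.
rewrite /denom; have [G0|G_neq0] := eqVneq (sqnorm (Gvec v)) 0.
  by rewrite G0 (Gvec_eq0 G0) sqnorm0 subr0 expr1n add0r.
by rewrite ltr_wpDr ?sqr_ge0 // lt_def G_neq0 sqnorm_ge0.
Qed.

Lemma Gvec_act t j v : SO2 t ->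
  Gvec (act (fun t j => diagC (aV t j)) t j v) = act (fun t j => diagC (aW t j)) t j (Gvec v).
Proof.
move=> t1; rewrite /act /Gvec !diagC_act !cvecK; congr cvec; apply: funext => i.
exact: G_equiv.
Qed.

Lemma normalized_continuous : continuous normalized.
Proof.
have Gvec_cont : continuous Gvec by apply: cvec_continuous.
have denom_cont : continuous denom.
  apply: continuous_add => [v|].
    by apply: continuous_comp; [apply: Gvec_cont | apply: sqnorm_continuous].
  have defect_cont : continuous (fun v : 'rV[R]_(\sum_(l < k) 2) => 1 - sqnorm v).
    apply: continuous_add; first exact: cst_continuous.
    by apply: continuous_opp; apply: sqnorm_continuous.
  have -> : (fun v : 'rV[R]_(\sum_(l < k) 2) => (1 - sqnorm v) ^+ 2) =
      fun v => (1 - sqnorm v) * (1 - sqnorm v).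
    by apply: funext => v; rewrite expr2.
  exact: continuous_mul.
apply: mx_continuous => a b.
have -> : (fun v => normalized v a b) = fun v => (Num.sqrt (denom v))^-1 * Gvec v a b.
  by apply: funext => v; rewrite mxE.
have sqrt_cont : continuous (fun v => Num.sqrt (denom v)).
  by move=> v; apply: continuous_comp; [apply: denom_cont | apply: sqrt_continuous].
apply: continuous_mul => v.
  by apply: (cvgV _ (sqrt_cont v)); rewrite gt_eqF // sqrtr_gt0 denom_gt0.
exact: (continuous_comp (Gvec_cont v) (@coord_continuous _ _ _ a b (Gvec v))).
Qed.

Lemma normalized_Gmap :
  Gmap (fun t j => diagC (aV t j)) (fun t j => diagC (aW t j)) normalized.
Proof.
split.
- move=> v v1; change (sqnorm (normalized v) = 1); change (sqnorm v = 1) in v1.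
  have denomE : denom v = sqnorm (Gvec v) by rewrite /denom v1 subrr expr0n addr0.
  rewrite sqnorm_scale exprVn sqr_sqrtr ?ltW ?denom_gt0 // denomE mulVf //.
  by apply/eqP => /Gvec_eq0 v0; move: v1; rewrite v0 sqnorm0 => /eqP; rewrite eq_sym oner_eq0.
- exact: continuous_subspaceT normalized_continuous.
- move=> t j v t1 _; rewrite /normalized /denom Gvec_act //.
  rewrite /act sqnorm_diagC_act => [|i]; last exact: aW1.
  by rewrite sqnorm_diagC_act => [|i]; [rewrite scalemxAl | exact: aV1].
Qed.

End NormalizedMap.

Lemma ccont_angle (R : realType) : ccont (fun t : 'M[R]_2 => angle t).
Proof. by split; apply: coord_continuous. Qed.

Lemma poly_map_continuous (R : realType) N (i : 'I_3) :
  ccont (fun v : 'rV[R]_(\sum_(l < 4) 2) => poly_map N (cblk v) i).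
Proof.
have cb := @ccont_cblk R 4.
case: i => [[|[|[|//]]] ?]; rewrite /poly_map /=.
- by apply: ccont_add; apply: ccont_exp.
- by apply: ccont_add; [|apply: ccont_opp]; apply: ccont_exp; [|apply: ccont_opp].
- by apply: ccont_add; apply: ccont_mul; try apply: ccont_conj.
Qed.

Section Construction.
Variables (R : realType) (p : nat) (xi : R[i]).
Hypotheses (p_gt1 : (1 < p)%N) (xi_p : xi ^+ p = 1) (xi_neq1 : xi != 1).

Definition rhoV (t : 'M[R]_2) (j : 'Z_p) : 'M[R]_(\sum_(i < 4) 2) :=
  diagC (actV (angle t) (xi ^+ j)).
Definition rhoW (t : 'M[R]_2) (j : 'Z_p) : 'M[R]_(\sum_(i < 3) 2) :=
  diagC (actW p (angle t) (xi ^+ j)).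

Lemma xi_unimodular : `|xi| = 1.
Proof. by apply/eqP; rewrite -(pexpr_eq1 (ltnW p_gt1)) // -normrX xi_p normr1. Qed.

Lemma xiXD (j k : 'Z_p) : xi ^+ (j + k)%R = xi ^+ j * xi ^+ k.
Proof.
have -> : nat_of_ord (j + k)%R = ((j + k) %% p)%N by rewrite /=; congr modn; apply: Zp_cast.
by rewrite expr_mod // exprD.
Qed.

Lemma xiX_unimodular (j : nat) : `|xi ^+ j| = 1.
Proof. by rewrite normrX xi_unimodular expr1n. Qed.

Lemma actV_unimodular t j i : SO2 t -> `|actV (angle t) (xi ^+ j) i| = 1.
Proof.
move=> /SO2P [_ t1]; rewrite /actV; case: ifP => _ //.
by rewrite normrM t1 xiX_unimodular mulr1.
Qed.

Lemma actW_unimodular t j i : SO2 t -> `|actW p (angle t) (xi ^+ j) i| = 1.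
Proof.
move=> /SO2P [_ t1]; rewrite /actW; case: ifP => _; last exact: xiX_unimodular.
by rewrite normrX t1 expr1n.
Qed.

Lemma rhoV_orth_rep : orth_rep rhoV.
Proof.
apply: diagC_orth_rep.
- exact: actV_unimodular.
- by move=> i; rewrite angle1 expr0 /actV mulr1; case: ifP.
- move=> t s j k i t1 _; rewrite angleM // xiXD /actV.
  by case: ifP => _ //; rewrite mulrACA.
- move=> j i; rewrite /actV; apply: ccont_if; first exact: ccont_angle.
  by apply: ccont_mul; [apply: ccont_angle | apply: ccont_cst].
Qed.

Lemma rhoW_orth_rep : orth_rep rhoW.
Proof.
apply: diagC_orth_rep.
- exact: actW_unimodular.
- by move=> i; rewrite angle1 expr0 /actW expr1n; case: ifP.
- move=> t s j k i t1 _; rewrite angleM // xiXD /actW.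
  by case: ifP => _ //; rewrite exprMn.
- move=> j i; rewrite /actW; apply: ccont_if; last exact: ccont_cst.
  by apply: ccont_exp; apply: ccont_angle.
Qed.

(* The rotation by pi acts as -1 on every coordinate of V. *)
Lemma rhoV_fixed_point_free : fixed_point_free rhoV.
Proof.
apply: diagC_fixed_point_free => i; exists (mulmx2 (-1)), 0; split.
  by apply: SO2_mulmx2; rewrite normrN1.
by rewrite angle_mulmx2 expr0 /actV mulr1 if_same; apply: neg1_neq1.
Qed.

(* A rotation u with u^p = -1 moves the V_{p,0} coordinates, and the
   generator of C_p moves the V_{0,1} coordinate. *)
Lemma rhoW_fixed_point_free : fixed_point_free rhoW.
Proof.
apply: diagC_fixed_point_free => i; rewrite /actW.
have [_ | _] := ltnP i 2.
  have [u [u1 up]] := unimodular_root_neg1 R[i] (ltnW p_gt1).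
  exists (mulmx2 u), 0; split; first exact: SO2_mulmx2.
  by rewrite angle_mulmx2 up; apply: neg1_neq1.
exists (mulmx2 1), 1; split; first by apply: SO2_mulmx2; rewrite normr1.
have -> : nat_of_ord (1 : 'Z_p) = 1%N by rewrite /= modn_small.
by rewrite expr1.
Qed.

Definition sphere_map : 'rV[R]_(\sum_(l < 4) 2) -> 'rV[R]_(\sum_(l < 3) 2) :=
  normalized (poly_map p).

Lemma sphere_map_Gmap : Gmap rhoV rhoW sphere_map.
Proof.
apply: normalized_Gmap.
- exact: actV_unimodular.
- exact: actW_unimodular.
- move=> t j z i /SO2P [_ t1]; apply: poly_map_equivariant => //.
  by rewrite -exprM mulnC exprM xi_p expr1n.
- by move=> z; apply: poly_map_eq0; apply: ltnW.
- exact: poly_map_continuous.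
Qed.

End Construction.

Theorem proposition4p5 (R : realType) (p : nat) (hp : prime p) :
  exists (n m : nat) (rhoV : 'M[R]_2 -> 'Z_p -> 'M[R]_n)
         (rhoW : 'M[R]_2 -> 'Z_p -> 'M[R]_m) (f : 'rV[R]_n -> 'rV[R]_m),
    [/\ orth_rep rhoV /\ orth_rep rhoW,
        fixed_point_free rhoV /\ fixed_point_free rhoW,
        (m < n)%N & Gmap rhoV rhoW f].
Proof.
have p_gt1 := prime_gt1 hp.
have [xi xi_p xi_neq1] := nontrivial_unity_root R[i] p_gt1.
exists (\sum_(i < 4) 2)%N, (\sum_(i < 3) 2)%N, (rhoV xi), (rhoW xi), (sphere_map p).
split.
- by split; [apply: rhoV_orth_rep | apply: rhoW_orth_rep].
- by split; [apply: rhoV_fixed_point_free | apply: rhoW_fixed_point_free].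
- by rewrite !big_const_ord.
- exact: sphere_map_Gmap.
Qed.
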